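(* Let $E \subseteq \mathbb{R}$. Then at least one of the following holds: (1) there is $u \in \mathbb{S}$ such that the restriction of $T_u$ to $E^2$ is a quasi-isometric embedding $E^2 \to \mathbb{R}$; (2) there is a linear map $S : \mathbb{R}^4 \to \mathbb{R}$ such that $S(E^4)$ is dense in $\mathbb{R}$.
   Context: $\mathbb{S}$ is the unit circle in $\mathbb{R}^2$. For $u = (u_1,u_2) \in \mathbb{S}$, $T_u : \mathbb{R}^2 \to \mathbb{R}$ is the orthogonal projection parallel to $u$, i.e. $T_u(x) = \langle x,(u_2,-u_1)\rangle$. For $\lambda,\delta>0$, a map $f : X \to Y$ between subsets of Euclidean spaces is a $(\lambda,\delta)$-quasi-isometry if $\frac{1}{\lambda}\|x-x'\| - \delta \leq \|f(x)-f(x')\| \leq \lambda\|x-x'\| + \delta$ for all $x,x' \in X$ and every $y \in Y$ is within distance $<\delta$ of some $f(x)$; a quasi-isometry is a $(\lambda,\delta)$-quasi-isometry for some $\lambda,\delta > 0$. A map $g : X \to \mathbb{R}$ is a quasi-isometric embedding if it is a quasi-isometry $X \to g(X)$. *)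

From Stdlib Require Import Reals.
Open Scope R_scope.

Definition R2 := (R * R)%type.
Definition R4 := (R * R * R * R)%type.

Definition dist2 (x y : R2) : R :=
  sqrt ((fst x - fst y) ^ 2 + (snd x - snd y) ^ 2).
Definition dist1 (x y : R) : R := Rabs (x - y).

Definition in_circle (u : R2) : Prop := (fst u) ^ 2 + (snd u) ^ 2 = 1.

Definition T (u : R2) (x : R2) : R := fst x * snd u + snd x * (- fst u).

Definition sq (E : R -> Prop) : R2 -> Prop := fun x => E (fst x) /\ E (snd x).

Definition pow4 (E : R -> Prop) : R4 -> Prop :=
  fun x => match x with (a, b, c, d) => E a /\ E b /\ E c /\ E d end.

Definition quasi_isometry_ld (X : R2 -> Prop) (Y : R -> Prop) (f : R2 -> R)
  (lam del : R) : Prop :=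
  (forall x x', X x -> X x' ->
     / lam * dist2 x x' - del <= dist1 (f x) (f x') /\
     dist1 (f x) (f x') <= lam * dist2 x x' + del) /\
  (forall y, Y y -> exists x, X x /\ dist1 y (f x) < del).

Definition quasi_isometry (X : R2 -> Prop) (Y : R -> Prop) (f : R2 -> R) : Prop :=
  exists lam del, 0 < lam /\ 0 < del /\ quasi_isometry_ld X Y f lam del.

Definition qi_embedding (X : R2 -> Prop) (g : R2 -> R) : Prop :=
  quasi_isometry X (fun y => exists x, X x /\ g x = y) g.

Definition add4 (x y : R4) : R4 :=
  match x, y with (a, b, c, d), (a', b', c', d') => (a + a', b + b', c + c', d + d') end.
Definition scal4 (k : R) (x : R4) : R4 :=
  match x with (a, b, c, d) => (k * a, k * b, k * c, k * d) end.
Definition linear4 (S : R4 -> R) : Prop :=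
  (forall x y, S (add4 x y) = S x + S y) /\ (forall k x, S (scal4 k x) = k * S x).

Definition dense_in_R (A : R -> Prop) : Prop :=
  forall r eps, 0 < eps -> exists a, A a /\ Rabs (r - a) < eps.

(* Suppose no projection T_u is a quasi-isometric embedding of E^2. Each T_u is
   1-Lipschitz, so it is the lower bound that fails: for every slope t there are
   differences (p, q) = (a - c, b - d) of points of E^2 that are arbitrarily long
   and whose angle with (t, 1) is arbitrarily small. Because such a difference is
   long, the nearby slope t' = (p - r) / q satisfies p - t' q = r exactly, for any
   prescribed r. Hence for every r the slopes t for which r is a value of the
   linear form S_t(a, b, c, d) = (a - c) - t (b - d) on E^4 are dense. The slopes
   for which S_t(E^4) meets a fixed rational interval then form a dense open set,
   and by the Baire category theorem a single slope t makes S_t(E^4) dense. *)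

From Stdlib Require Import Reals Rtopology Lra Lia Cantor Classical.
From mathcomp Require ssreflect ssrbool ssralg classical_sets topology normedtype sequences
  Rstruct Rstruct_topology.
Open Scope R_scope.

Module RealBaire.
Import ssreflect ssrbool ssralg classical_sets topology normedtype sequences
  Rstruct Rstruct_topology.
Import numFieldNormedType.Exports.

Lemma ballE (x e y : R) : ball (x : R^o) e y <-> Rabs (x - y) < e.
Proof. by rewrite -ball_normE /ball_ /=; split => /RltP. Qed.

Lemma open_set_open {A : R -> Prop} : open_set A -> open (A : set R^o).
Proof.
move=> oA; rewrite openE => t /oA [[eta /= eta0] Aeta].
apply/nbhs_ballP; exists eta; first exact/RltP.
by move=> s /ballE ts; apply: Aeta; rewrite /disc Rabs_minus_sym.
Qed.

Lemma dense_in_R_dense {A : R -> Prop} : dense_in_R A -> dense (A : set R^o).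
Proof.
move=> dA O [x Ox] oO.
have /nbhs_ballP [e /RltP e0 xe] : nbhs (x : R^o) O by rewrite openE in oO; exact: oO.
have [t [At xt]] := dA x e e0.
by exists t; split => //; apply: xe; apply/ballE.
Qed.

Lemma baire (U : nat -> R -> Prop) :
  (forall n, open_set (U n)) -> (forall n, dense_in_R (U n)) ->
  dense_in_R (fun t => forall n, U n t).
Proof.
move=> oU dU r e e0.
have := @Baire _ R^o U (fun n => conj (open_set_open (oU n)) (dense_in_R_dense (dU n))).
case/(_ (ball (r : R^o) e)).
- by exists r; apply/ballE; rewrite Rminus_diag Rabs_R0.
- exact: ball_open.
by move=> t [/ballE rt Ut]; exists t; split => // n; exact: Ut.
Qed.

End RealBaire.

(* [(grid_center n, grid_radius n)] runs over all pairs [(z / (m + 1), 1 / (m + 1))]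
   with [z = j - k] an integer. *)
Definition grid_center (n : nat) : R :=
  let '(i, m) := Cantor.of_nat n in
  let '(j, k) := Cantor.of_nat i in (INR j - INR k) / (INR m + 1).

Definition grid_radius (n : nat) : R := / (INR (snd (Cantor.of_nat n)) + 1).

Lemma grid_radius_pos (n : nat) : 0 < grid_radius n.
Proof.
  unfold grid_radius. pose proof (pos_INR (snd (Cantor.of_nat n))).
  apply Rinv_0_lt_compat. lra.
Qed.

Lemma IZR_nat_diff (z : Z) : IZR z = INR (Z.to_nat z) - INR (Z.to_nat (- z)).
Proof. rewrite !INR_IZR_INZ, <- minus_IZR. f_equal. lia. Qed.

Lemma grid_approx (r eps : R) : 0 < eps ->
  exists n, Rabs (r - grid_center n) <= grid_radius n /\ 2 * grid_radius n < eps.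
Proof.
  intros Heps.
  destruct (archimed_cor1 (eps / 2)) as [m [Hm Hm0]]; [lra |].
  apply lt_0_INR in Hm0.
  set (z := up (r * (INR m + 1))).
  destruct (archimed (r * (INR m + 1))) as [Hz1 Hz2]; fold z in Hz1, Hz2.
  exists (Cantor.to_nat (Cantor.to_nat (Z.to_nat z, Z.to_nat (- z)), m)).
  unfold grid_center, grid_radius; rewrite !Cantor.cancel_of_to, <- IZR_nat_diff; simpl.
  set (M := INR m + 1) in *.
  assert (HM : 0 < M) by (unfold M; lra).
  assert (HMinv : 0 < / M) by (apply Rinv_0_lt_compat; lra).
  split.
  - replace (r - IZR z / M) with ((r * M - IZR z) * / M) by (field; lra).
    assert (M * / M = 1) by (field; lra).
    apply Rabs_le. split; nra.
  - assert (/ M < / INR m) by (apply Rinv_lt_contravar; unfold M; nra).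
    lra.
Qed.

Lemma dense_image_at_some_parameter (I : Type) (P : I -> Prop) (f : R -> I -> R) :
  (forall i, continuity (fun t => f t i)) ->
  (forall y, dense_in_R (fun t => exists i, P i /\ f t i = y)) ->
  exists t, dense_in_R (fun y => exists i, P i /\ f t i = y).
Proof.
  intros Hcont Hdense.
  set (U n t := exists i, P i /\ Rabs (f t i - grid_center n) < grid_radius n).
  assert (HU_open : forall n, open_set (U n)).
  { intros n t [i [Pi Hi]].
    assert (Hpre : open_set (image_rec (fun s => f s i)
                     (disc (grid_center n) (mkposreal _ (grid_radius_pos n)))))
      by exact (continuity_P2 _ _ (Hcont i) (disc_P1 _ _)).
    destruct (Hpre t Hi) as [delta Hdelta].
    exists delta. intros s Hs. exists i. split; [exact Pi | exact (Hdelta s Hs)]. }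
  assert (HU_dense : forall n, dense_in_R (U n)).
  { intros n t0 eta Heta.
    destruct (Hdense (grid_center n) t0 eta Heta) as [t [[i [Pi Hi]] Ht]].
    exists t. split; [| exact Ht]. exists i. split; [exact Pi |].
    rewrite Hi, Rminus_diag, Rabs_R0. apply grid_radius_pos. }
  destruct (RealBaire.baire U HU_open HU_dense 0 1 Rlt_0_1) as [t [Ht _]].
  exists t. intros y eps Heps.
  destruct (grid_approx y eps Heps) as [n [Hy Hn]].
  destruct (Ht n) as [i [Pi Hi]].
  exists (f t i). split; [eauto |].
  replace (y - f t i) with ((y - grid_center n) + (grid_center n - f t i)) by ring.
  pose proof (Rabs_triang (y - grid_center n) (grid_center n - f t i)) as Htri.
  rewrite Rabs_minus_sym in Hi. lra.
Qed.

Lemma T_sub (u x x' : R2) :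
  T u x - T u x' = (fst x - fst x') * snd u - (snd x - snd x') * fst u.
Proof. unfold T. ring. Qed.

Lemma T_1_lipschitz (u x x' : R2) : in_circle u -> dist1 (T u x) (T u x') <= dist2 x x'.
Proof.
  unfold in_circle, dist1, dist2. intros Hu. rewrite T_sub.
  set (p := fst x - fst x'). set (q := snd x - snd x').
  rewrite <- sqrt_Rsqr_abs. apply sqrt_le_1_alt. unfold Rsqr.
  assert (Hlagrange : (p ^ 2 + q ^ 2) * (fst u ^ 2 + snd u ^ 2)
    = (p * snd u - q * fst u) ^ 2 + (p * fst u + q * snd u) ^ 2) by ring.
  rewrite Hu in Hlagrange. pose proof (pow2_ge_0 (p * fst u + q * snd u)). nra.
Qed.

Lemma qi_embedding_T_of_lower_bound (X : R2 -> Prop) (u : R2) (lam del : R) :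
  in_circle u -> 1 <= lam -> 0 < del ->
  (forall x x', X x -> X x' -> / lam * dist2 x x' - del <= dist1 (T u x) (T u x')) ->
  qi_embedding X (T u).
Proof.
  intros Hu Hlam Hdel Hlow. exists lam, del. split; [lra |]. split; [exact Hdel |]. split.
  - intros x x' Hx Hx'. split; [exact (Hlow x x' Hx Hx') |].
    pose proof (T_1_lipschitz u x x' Hu).
    assert (0 <= dist2 x x') by apply sqrt_pos. nra.
  - intros y [x [Hx <-]]. exists x. split; [exact Hx |].
    unfold dist1. rewrite Rminus_diag, Rabs_R0. exact Hdel.
Qed.

Lemma not_qi_embedding_T (X : R2 -> Prop) (u : R2) (eps M : R) :
  in_circle u -> ~ qi_embedding X (T u) -> 0 < eps ->
  exists x x', X x /\ X x' /\ M <= dist2 x x' /\ dist1 (T u x) (T u x') <= eps * dist2 x x'.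
Proof.
  intros Hu Hq Heps. apply NNPP. intros Hnone. apply Hq.
  pose proof (Rinv_0_lt_compat eps Heps). pose proof (Rabs_pos M). pose proof (Rle_abs M).
  assert (Hinv : / (1 + / eps) < eps).
  { rewrite <- (Rinv_inv eps) at 2. apply Rinv_lt_contravar; nra. }
  assert (Hinv1 : / (1 + / eps) <= 1).
  { rewrite <- Rinv_1. apply Rinv_le_contravar; lra. }
  (* A pair violating the lower bound for these constants has both properties. *)
  apply (qi_embedding_T_of_lower_bound X u (1 + / eps) (Rabs M + 1)); [exact Hu | lra | lra |].
  intros x x' Hx Hx'. apply Rnot_lt_le. intros Hlt. apply Hnone. exists x, x'.
  assert (Hs : 0 <= dist2 x x') by apply sqrt_pos.
  assert (Hd : 0 <= dist1 (T u x) (T u x')) by apply Rabs_pos.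
  repeat split; [exact Hx | exact Hx' | nra | nra].
Qed.

Definition slope_dir (t : R) : R2 := (t / sqrt (1 + t ^ 2), 1 / sqrt (1 + t ^ 2)).

Lemma sqrt_1_plus_sq_pos (t : R) : 0 < sqrt (1 + t ^ 2).
Proof. apply sqrt_lt_R0. pose proof (pow2_ge_0 t). lra. Qed.

Lemma slope_dir_in_circle (t : R) : in_circle (slope_dir t).
Proof.
  unfold in_circle, slope_dir; cbn [fst snd].
  pose proof (sqrt_1_plus_sq_pos t) as HN. pose proof (pow2_ge_0 t).
  replace ((t / sqrt (1 + t ^ 2)) ^ 2 + (1 / sqrt (1 + t ^ 2)) ^ 2)
    with ((1 + t ^ 2) / (sqrt (1 + t ^ 2) * sqrt (1 + t ^ 2))) by (field; lra).
  rewrite sqrt_sqrt by lra. field. lra.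
Qed.

Lemma T_slope_dir (t : R) (x : R2) :
  T (slope_dir t) x = (fst x - t * snd x) / sqrt (1 + t ^ 2).
Proof. unfold T, slope_dir; cbn [fst snd]. pose proof (sqrt_1_plus_sq_pos t). field. lra. Qed.

Lemma near_slope_pairs (E : R -> Prop) (t eps M : R) :
  ~ qi_embedding (sq E) (T (slope_dir t)) -> 0 < eps ->
  exists a b c d, E a /\ E b /\ E c /\ E d /\
    M <= sqrt ((a - c) ^ 2 + (b - d) ^ 2) /\
    Rabs ((a - c) - t * (b - d)) <= eps * sqrt ((a - c) ^ 2 + (b - d) ^ 2).
Proof.
  intros Hq Heps.
  pose proof (sqrt_1_plus_sq_pos t) as HN.
  destruct (not_qi_embedding_T (sq E) (slope_dir t) (eps / sqrt (1 + t ^ 2)) M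
              (slope_dir_in_circle t) Hq)
    as [[a b] [[c d] [[Ea Eb] [[Ec Ed] [HM Hclose]]]]].
  { apply Rdiv_lt_0_compat; lra. }
  exists a, b, c, d. unfold dist1, dist2 in *. cbn [fst snd] in *.
  repeat split; try assumption.
  rewrite !T_slope_dir in Hclose. cbn [fst snd] in Hclose.
  replace ((a - t * b) / sqrt (1 + t ^ 2) - (c - t * d) / sqrt (1 + t ^ 2))
    with ((a - c - t * (b - d)) * / sqrt (1 + t ^ 2)) in Hclose by (field; lra).
  rewrite Rabs_mult, (Rabs_pos_eq (/ _)) in Hclose by (left; apply Rinv_0_lt_compat; lra).
  apply (Rmult_le_compat_r (sqrt (1 + t ^ 2))) in Hclose; [| lra].
  replace (Rabs (a - c - t * (b - d)) * / sqrt (1 + t ^ 2) * sqrt (1 + t ^ 2))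
    with (Rabs (a - c - t * (b - d))) in Hclose by (field; lra).
  replace (eps / sqrt (1 + t ^ 2) * sqrt ((a - c) ^ 2 + (b - d) ^ 2) * sqrt (1 + t ^ 2))
    with (eps * sqrt ((a - c) ^ 2 + (b - d) ^ 2)) in Hclose by (field; lra).
  exact Hclose.
Qed.

Lemma sqrt_sum_sq_le_slope (p q t : R) :
  sqrt (p ^ 2 + q ^ 2) <= (Rabs t + 1) * Rabs q + Rabs (p - t * q).
Proof.
  assert (Hp : Rabs p <= Rabs t * Rabs q + Rabs (p - t * q)).
  { rewrite <- Rabs_mult. replace p with (t * q + (p - t * q)) at 1 by ring. apply Rabs_triang. }
  assert (Hpq : sqrt (p ^ 2 + q ^ 2) <= Rabs p + Rabs q).
  { pose proof (Rabs_pos p). pose proof (Rabs_pos q).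
    rewrite <- (sqrt_pow2 (Rabs p + Rabs q)) by lra. apply sqrt_le_1_alt.
    rewrite <- (pow2_abs p), <- (pow2_abs q). nra. }
  lra.
Qed.

Lemma near_slope_defect_lt (p q t r eps eta : R) :
  0 < eta -> eps <= 1 / 2 -> 4 * (Rabs t + 1) * eps <= eta ->
  4 * (Rabs t + 1) * (Rabs r + 1) <= eta * sqrt (p ^ 2 + q ^ 2) ->
  Rabs (p - t * q) <= eps * sqrt (p ^ 2 + q ^ 2) ->
  Rabs (p - t * q - r) < eta * Rabs q.
Proof.
  intros Heta Heps HepsK Hlong Hnear.
  pose proof (sqrt_sum_sq_le_slope p q t) as Hs.
  set (s := sqrt (p ^ 2 + q ^ 2)) in *. set (A := Rabs (p - t * q)) in *.
  set (K := Rabs t + 1) in *.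
  assert (HK : 1 <= K) by (unfold K; pose proof (Rabs_pos t); lra).
  assert (Hs0 : 0 <= s) by apply sqrt_pos.
  assert (Hsq : s <= 2 * K * Rabs q) by nra.
  assert (HA : 2 * A <= eta * Rabs q).
  { apply (Rmult_le_reg_l (2 * K)); [lra |]. nra. }
  assert (Hr : 2 * (Rabs r + 1) <= eta * Rabs q).
  { apply (Rmult_le_reg_l (2 * K)); [lra |]. nra. }
  assert (Rabs (p - t * q - r) <= A + Rabs r) by (rewrite <- (Rabs_Ropp r); apply Rabs_triang).
  lra.
Qed.

Definition slope_form (t : R) (x : R4) : R :=
  let '(a, b, c, d) := x in (a - c) - t * (b - d).

Lemma slope_form_linear (t : R) : linear4 (slope_form t).
Proof.
  split.
  - intros [[[a b] c] d] [[[a' b'] c'] d']. simpl. ring.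
  - intros k [[[a b] c] d]. simpl. ring.
Qed.

Lemma slope_form_continuous (x : R4) : continuity (fun t => slope_form t x).
Proof. destruct x as [[[a b] c] d]. simpl. reg. Qed.

Lemma dense_slopes_attaining (E : R -> Prop) (r : R) :
  (forall t, ~ qi_embedding (sq E) (T (slope_dir t))) ->
  dense_in_R (fun t => exists x, pow4 E x /\ slope_form t x = r).
Proof.
  intros Hno t0 eta Heta.
  set (K := Rabs t0 + 1).
  assert (HK : 1 <= K) by (unfold K; pose proof (Rabs_pos t0); lra).
  set (eps := Rmin (1 / 2) (eta / (4 * K))).
  assert (Heps : 0 < eps) by (apply Rmin_glb_lt; [lra | apply Rdiv_lt_0_compat; lra]).
  destruct (near_slope_pairs E t0 eps (4 * K * (Rabs r + 1) / eta) (Hno t0) Heps)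
    as [a [b [c [d [Ea [Eb [Ec [Ed [Hlong Hnear]]]]]]]]].
  set (p := a - c) in *. set (q := b - d) in *.
  assert (Hdefect : Rabs (p - t0 * q - r) < eta * Rabs q).
  { apply (near_slope_defect_lt p q t0 r eps eta Heta (Rmin_l _ _)); [| | exact Hnear].
    - pose proof (Rmin_r (1 / 2) (eta / (4 * K))) as HepsK.
      apply (Rmult_le_compat_l (4 * K)) in HepsK; [| lra].
      replace (4 * K * (eta / (4 * K))) with eta in HepsK by (field; lra). exact HepsK.
    - apply (Rmult_le_compat_l eta) in Hlong; [| lra].
      replace (eta * (4 * K * (Rabs r + 1) / eta)) with (4 * K * (Rabs r + 1)) in Hlong
        by (field; lra). exact Hlong. }
  assert (Hq : 0 < Rabs q) by (pose proof (Rabs_pos (p - t0 * q - r)); nra).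
  assert (Hq0 : q <> 0) by (intros Hq0; rewrite Hq0, Rabs_R0 in Hq; lra).
  exists ((p - r) / q). split.
  - exists (a, b, c, d). split; [repeat split; assumption |].
    simpl. fold p q. field. exact Hq0.
  - rewrite Rabs_minus_sym.
    replace ((p - r) / q - t0) with ((p - t0 * q - r) * / q) by (field; exact Hq0).
    rewrite Rabs_mult, Rabs_inv.
    apply (Rmult_lt_reg_r (Rabs q)); [exact Hq |].
    rewrite Rmult_assoc, Rinv_l, Rmult_1_r by lra. exact Hdefect.
Qed.

Theorem lemma3p3 (E : R -> Prop) :
  (exists u : R2, in_circle u /\ qi_embedding (sq E) (T u)) \/
  (exists S : R4 -> R, linear4 S /\
     dense_in_R (fun y => exists x, pow4 E x /\ S x = y)).
Proof.
  destruct (classic (exists t, qi_embedding (sq E) (T (slope_dir t)))) as [[t Ht] | Hno].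
  - left. exists (slope_dir t). split; [apply slope_dir_in_circle | exact Ht].
  - right.
    destruct (dense_image_at_some_parameter R4 (pow4 E) slope_form) as [t Ht].
    + apply slope_form_continuous.
    + intros r. apply dense_slopes_attaining. intros t Ht. apply Hno. exists t. exact Ht.
    + exists (slope_form t). split; [apply slope_form_linear | exact Ht].
Qed.
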